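(* Let $\mathcal{I}$, $\mathcal{I'}$ and $\mathcal{I''}$ be group interface automata. If $\mathcal{I}$ and $\mathcal{I'}$ are composable, then $\mathcal{I}\otimes \mathcal{I'} = \mathcal{I'}\otimes \mathcal{I}$. If $\mathcal{I}$, $\mathcal{I'}$ and $\mathcal{I''}$ are pairwise composable, then $(\mathcal{I}\otimes \mathcal{I''})\otimes \mathcal{I'} = \mathcal{I}\otimes (\mathcal{I'}\otimes \mathcal{I''})$.
   Context: Fix a set $\mathcal{P}$ of participants and a set $\mathcal{M}$ of messages. A group interface automaton (GIA) is a tuple $\mathcal{I}=(V, v_0,\mathcal{G},\mathcal{A},\mathcal{T})$ where $V$ is a finite set of states, $v_0\in V$ is the initial state, $\mathcal{G}\subseteq\mathcal{P}$ is a finite set of participants, $\mathcal{A}=\mathcal{A}^I\cup\mathcal{A}^O\cup\mathcal{A}^H$ with $\mathcal{A}^I=(\mathcal{P}\setminus\mathcal{G})\times\mathcal{G}\times\{?\}\times\mathcal{M}$ (inputs, written $AB?m$), $\mathcal{A}^O=\mathcal{G}\times(\mathcal{P}\setminus\mathcal{G})\times\{!\}\times\mathcal{M}$ (outputs, written $AB!m$), $\mathcal{A}^H=\mathcal{G}\times\mathcal{G}\times\{!?\}\times\mathcal{M}$ (internal actions, written $AB!?m$), and $\mathcal{T}\subseteq V\times(\mathcal{A}\cup\{\tau\})\times V$ is a set of transitions, $\tau$ being a special internal action. For GIA $\mathcal{I}$ (actions $\mathcal{A}$) and $\mathcal{I'}$ (actions $\mathcal{A'}$) define the shared inputs $\textit{si}(\mathcal{I},\mathcal{I'})=\{AB?m\in\mathcal{A}\mid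 AB!m\in\mathcal{A'}\}\cup\{AB?m\in\mathcal{A'}\mid AB!m\in\mathcal{A}\}$, shared outputs $\textit{so}(\mathcal{I},\mathcal{I'})=\{AB!m\in\mathcal{A}\mid AB?m\in\mathcal{A'}\}\cup\{AB!m\in\mathcal{A'}\mid AB?m\in\mathcal{A}\}$, and shared internals $\textit{sh}(\mathcal{I},\mathcal{I'})=\{AB!?m\mid AB!m\in\mathcal{A}, AB?m\in\mathcal{A'}\}\cup\{AB!?m\mid AB!m\in\mathcal{A'}, AB?m\in\mathcal{A}\}$. Two GIA $\mathcal{I'}=(V',v_0',\mathcal{G'},\mathcal{A'},\mathcal{T'})$ and $\mathcal{I''}=(V'',v_0'',\mathcal{G''},\mathcal{A''},\mathcal{T''})$ are composable if $\mathcal{G'}\cap\mathcal{G''}=\emptyset$, and then their product is $\mathcal{I'}\otimes\mathcal{I''}=(V'\times V'',(v_0',v_0''),\mathcal{G'}\cup\mathcal{G''},\mathcal{A}^I\cup\mathcal{A}^O\cup\mathcal{A}^H,\mathcal{T})$ with $\mathcal{A}^I=(\mathcal{A'}^I\cup\mathcal{A''}^I)\setminus\textit{si}(\mathcal{I'},\mathcal{I''})$, $\mathcal{A}^O=(\mathcal{A'}^O\cup\mathcal{A''}^O)\setminus\textit{so}(\mathcal{I'},\mathcal{I''})$, $\mathcal{A}^H=\mathcal{A'}^H\cup\mathcal{A''}^H\cup\textit{sh}(\mathcal{I'},\mathcal{I''})$, and $\mathcal{T}$ consisting of: $(v',v'')\xrightarrow{\alpha}(u',v'')$ for $v'\xrightarrow{\alpha}u'\in\mathcal{T'}$,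 $\alpha\notin\textit{si}\cup\textit{so}$, $v''\in V''$; $(v',v'')\xrightarrow{\alpha}(v',u'')$ for $v''\xrightarrow{\alpha}u''\in\mathcal{T''}$, $\alpha\notin\textit{si}\cup\textit{so}$, $v'\in V'$; $(v',v'')\xrightarrow{AB!?m}(u',u'')$ whenever $v'\xrightarrow{AB!m}u'\in\mathcal{T'}$ and $v''\xrightarrow{AB?m}u''\in\mathcal{T''}$; and $(v',v'')\xrightarrow{AB!?m}(u',u'')$ whenever $v''\xrightarrow{AB!m}u''\in\mathcal{T''}$ and $v'\xrightarrow{AB?m}u'\in\mathcal{T'}$ (here $\textit{si},\textit{so}$ are taken for $(\mathcal{I'},\mathcal{I''})$). *)

From Stdlib Require Import List.

Set Implicit Arguments.

Section GIA.
Variables (P M : Type).  (* participants and messages *)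

(* Actions: AB?m (input), AB!m (output), AB!?m (internal). *)
Inductive action :=
| Inp (a b : P) (m : M)
| Outp (a b : P) (m : M)
| Hid (a b : P) (m : M).

Record gia := GIA {
  st : Type;
  init : st;
  grp : P -> Prop;
  actI : action -> Prop;
  actO : action -> Prop;
  actH : action -> Prop;
  trans : st -> option action -> st -> Prop  (* T; None = tau *)
}.

Definition acts (I : gia) (x : action) : Prop := actI I x \/ actO I x \/ actH I x.

Definition finite_set {X : Type} (A : X -> Prop) : Prop :=
  exists l : list X, forall x, A x -> In x l.

Definition wf_gia (I : gia) : Prop :=
  finite_set (fun _ : st I => True) /\
  finite_set (grp I) /\
  (forall x, actI I x -> exists a b m, x = Inp a b m /\ ~ grp I a /\ grp I b) /\
  (forall x, actO I x -> exists a b m, x = Outp a b m /\ grp I a /\ ~ grp I b) /\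
  (forall x, actH I x -> exists a b m, x = Hid a b m /\ grp I a /\ grp I b) /\
  (forall v x u, trans I v (Some x) u -> acts I x).

Definition composable (I1 I2 : gia) : Prop :=
  forall p, ~ (grp I1 p /\ grp I2 p).

Definition si (I1 I2 : gia) (x : action) : Prop :=
  match x with
  | Inp a b m => (acts I1 x /\ acts I2 (Outp a b m)) \/ (acts I2 x /\ acts I1 (Outp a b m))
  | _ => False
  end.

Definition so (I1 I2 : gia) (x : action) : Prop :=
  match x with
  | Outp a b m => (acts I1 x /\ acts I2 (Inp a b m)) \/ (acts I2 x /\ acts I1 (Inp a b m))
  | _ => False
  end.

Definition sh (I1 I2 : gia) (x : action) : Prop :=
  match x with
  | Hid a b m => (acts I1 (Outp a b m) /\ acts I2 (Inp a b m))
                 \/ (acts I2 (Outp a b m) /\ acts I1 (Inp a b m))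
  | _ => False
  end.

Definition shared_lab (I1 I2 : gia) (l : option action) : Prop :=
  match l with
  | None => False
  | Some x => si I1 I2 x \/ so I1 I2 x
  end.

Definition gprod (I1 I2 : gia) : gia :=
  {| st := (st I1 * st I2)%type;
     init := (init I1, init I2);
     grp := fun p => grp I1 p \/ grp I2 p;
     actI := fun x => (actI I1 x \/ actI I2 x) /\ ~ si I1 I2 x;
     actO := fun x => (actO I1 x \/ actO I2 x) /\ ~ so I1 I2 x;
     actH := fun x => actH I1 x \/ actH I2 x \/ sh I1 I2 x;
     trans := fun v l u =>
       (trans I1 (fst v) l (fst u) /\ snd u = snd v /\ ~ shared_lab I1 I2 l)
       \/ (trans I2 (snd v) l (snd u) /\ fst u = fst v /\ ~ shared_lab I1 I2 l)
       \/ (exists a b m, l = Some (Hid a b m) /\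
             ((trans I1 (fst v) (Some (Outp a b m)) (fst u) /\
               trans I2 (snd v) (Some (Inp a b m)) (snd u))
              \/ (trans I2 (snd v) (Some (Outp a b m)) (snd u) /\
                  trans I1 (fst v) (Some (Inp a b m)) (fst u))))
  |}.

(* Equality of GIA up to renaming of states (the product's state set is a
   cartesian product, so "=" is read as isomorphism via a state bijection). *)
Definition gia_iso (I J : gia) : Prop :=
  exists (f : st I -> st J) (g : st J -> st I),
    (forall v, g (f v) = v) /\ (forall w, f (g w) = w) /\
    f (init I) = init J /\
    (forall p, grp I p <-> grp J p) /\
    (forall x, actI I x <-> actI J x) /\
    (forall x, actO I x <-> actO J x) /\
    (forall x, actH I x <-> actH J x) /\
    (forall v l u, trans I v l u <-> trans J (f v) l (f u)).

End GIA.

(* Commutativity holds because every ingredient of the product is symmetric in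
   its two factors.  For associativity fix a channel (a, b, m).  In a
   well-formed automaton an input on it puts b, and an output puts a, into the
   group, so among pairwise composable automata at most one receives on the
   channel, at most one sends, and none does both.  Under these constraints a
   product receives iff some factor receives and none sends, sends iff some
   factor sends and none receives, and hides iff some factor hides or some
   factor receives and another sends; these descriptions are associative, and
   the same bookkeeping applies to the transitions.  Products need not be well
   formed (an input whose sender lies in the other group survives when that
   group never emits it), so the argument runs with the weaker invariant
   [wt_gia], which products preserve. *)

From Stdlib Require Import Setoid.

Set Implicit Arguments.

Section Product.
Variables P M : Type.
Implicit Types X Y Z : gia P M.

Definition receives X a b m : Prop := actI X (Inp a b m).
Definition sends X a b m : Prop := actO X (Outp a b m).
Definition hides X a b m : Prop := actH X (Hid a b m).

Definition typed X : Prop :=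
  (forall x, actI X x -> exists a b m, x = Inp a b m) /\
  (forall x, actO X x -> exists a b m, x = Outp a b m) /\
  (forall x, actH X x -> exists a b m, x = Hid a b m).

Definition coherent X : Prop := forall a b m, ~ (receives X a b m /\ sends X a b m).

Definition trans_in_acts X : Prop := forall v x u, trans X v (Some x) u -> acts X x.

Definition wt_gia X : Prop := typed X /\ coherent X /\ trans_in_acts X.

Definition separated X Y : Prop := forall a b m,
  ~ (receives X a b m /\ receives Y a b m) /\ ~ (sends X a b m /\ sends Y a b m).

Definition linked X Y a b m : Prop :=
  (receives X a b m \/ receives Y a b m) /\ (sends X a b m \/ sends Y a b m).

Definition interleaved X Y (v : st X * st Y) l (u : st X * st Y) : Prop :=
  trans X (fst v) l (fst u) /\ snd u = snd v \/ trans Y (snd v) l (snd u) /\ fst u = fst v.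

Definition handshake X Y (v : st X * st Y) a b m (u : st X * st Y) : Prop :=
  trans X (fst v) (Some (Outp a b m)) (fst u) /\ trans Y (snd v) (Some (Inp a b m)) (snd u)
  \/ trans Y (snd v) (Some (Outp a b m)) (snd u) /\ trans X (fst v) (Some (Inp a b m)) (fst u).

Lemma wf_receives X a b m : wf_gia X -> receives X a b m -> ~ grp X a /\ grp X b.
Proof.
  intros (_ & _ & HI & _) H.
  destruct (HI _ H) as (a' & b' & m' & E & Ha & Hb); injection E as -> -> ->; auto.
Qed.

Lemma wf_sends X a b m : wf_gia X -> sends X a b m -> grp X a /\ ~ grp X b.
Proof.
  intros (_ & _ & _ & HO & _) H.
  destruct (HO _ H) as (a' & b' & m' & E & Ha & Hb); injection E as -> -> ->; auto.
Qed.

Lemma wf_wt_gia X : wf_gia X -> wt_gia X.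
Proof.
  intros W; split; [|split].
  - destruct W as (_ & _ & HI & HO & HH & _); repeat split; intros x Hx.
    + destruct (HI x Hx) as (a & b & m & -> & _); eauto.
    + destruct (HO x Hx) as (a & b & m & -> & _); eauto.
    + destruct (HH x Hx) as (a & b & m & -> & _); eauto.
  - intros a b m [Hr Hs]; apply (wf_receives _ _ _ W) in Hr; apply (wf_sends _ _ _ W) in Hs; tauto.
  - destruct W as (_ & _ & _ & _ & _ & HT); exact HT.
Qed.

Lemma wf_separated X Y : wf_gia X -> wf_gia Y -> composable X Y -> separated X Y.
Proof.
  intros WX WY C a b m; split; intros [HX HY].
  - apply (C b); split; [apply (wf_receives _ _ _ WX HX) | apply (wf_receives _ _ _ WY HY)].
  - apply (C a); split; [apply (wf_sends _ _ _ WX HX) | apply (wf_sends _ _ _ WY HY)].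
Qed.

Lemma separated_sym X Y : separated X Y -> separated Y X.
Proof. intros S a b m; specialize (S a b m); tauto. Qed.

Section WellTyped.
Variable X : gia P M.
Hypothesis wtX : wt_gia X.

Lemma acts_Inp a b m : acts X (Inp a b m) <-> receives X a b m.
Proof.
  destruct wtX as ((_ & HO & HH) & _); unfold acts, receives; split; [|now left].
  intros [H | [H | H]]; [exact H | apply HO in H | apply HH in H];
    destruct H as (? & ? & ? & E); discriminate.
Qed.

Lemma acts_Outp a b m : acts X (Outp a b m) <-> sends X a b m.
Proof.
  destruct wtX as ((HI & _ & HH) & _); unfold acts, sends; split; [|now right; left].
  intros [H | [H | H]]; [apply HI in H | exact H | apply HH in H];
    destruct H as (? & ? & ? & E); discriminate.
Qed.

Lemma acts_Hid a b m : acts X (Hid a b m) <-> hides X a b m.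
Proof.
  destruct wtX as ((HI & HO & _) & _); unfold acts, hides; split; [|now right; right].
  intros [H | [H | H]]; [apply HI in H | apply HO in H | exact H];
    destruct H as (? & ? & ? & E); discriminate.
Qed.

Lemma trans_receives v u a b m : trans X v (Some (Inp a b m)) u -> receives X a b m.
Proof. intros T; apply acts_Inp; exact (proj2 (proj2 wtX) _ _ _ T). Qed.

Lemma trans_sends v u a b m : trans X v (Some (Outp a b m)) u -> sends X a b m.
Proof. intros T; apply acts_Outp; exact (proj2 (proj2 wtX) _ _ _ T). Qed.

Lemma trans_hides v u a b m : trans X v (Some (Hid a b m)) u -> hides X a b m.
Proof. intros T; apply acts_Hid; exact (proj2 (proj2 wtX) _ _ _ T). Qed.

End WellTyped.

Lemma typed_actI_ext X Y : typed X -> typed Y ->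
  (forall a b m, receives X a b m <-> receives Y a b m) -> forall x, actI X x <-> actI Y x.
Proof.
  intros (HX & _) (HY & _) E x; split; intros H;
  [destruct (HX _ H) as (a & b & m & ->) | destruct (HY _ H) as (a & b & m & ->)]; apply E; exact H.
Qed.

Lemma typed_actO_ext X Y : typed X -> typed Y ->
  (forall a b m, sends X a b m <-> sends Y a b m) -> forall x, actO X x <-> actO Y x.
Proof.
  intros (_ & HX & _) (_ & HY & _) E x; split; intros H;
  [destruct (HX _ H) as (a & b & m & ->) | destruct (HY _ H) as (a & b & m & ->)]; apply E; exact H.
Qed.

Lemma typed_actH_ext X Y : typed X -> typed Y ->
  (forall a b m, hides X a b m <-> hides Y a b m) -> forall x, actH X x <-> actH Y x.
Proof.
  intros (_ & _ & HX) (_ & _ & HY) E x; split; intros H;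
  [destruct (HX _ H) as (a & b & m & ->) | destruct (HY _ H) as (a & b & m & ->)]; apply E; exact H.
Qed.

Section Binary.
Variables X Y : gia P M.
Hypotheses (wtX : wt_gia X) (wtY : wt_gia Y).

Lemma linked_cross a b m :
  linked X Y a b m <-> receives X a b m /\ sends Y a b m \/ receives Y a b m /\ sends X a b m.
Proof.
  destruct wtX as (_ & CX & _), wtY as (_ & CY & _); specialize (CX a b m); specialize (CY a b m).
  unfold linked; tauto.
Qed.

Lemma si_Inp a b m : si X Y (Inp a b m) <-> linked X Y a b m.
Proof. cbn; rewrite !acts_Inp, !acts_Outp, linked_cross by assumption; reflexivity. Qed.

Lemma so_Outp a b m : so X Y (Outp a b m) <-> linked X Y a b m.
Proof. cbn; rewrite !acts_Inp, !acts_Outp, linked_cross by assumption; tauto. Qed.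

Lemma sh_Hid a b m : sh X Y (Hid a b m) <-> linked X Y a b m.
Proof. cbn; rewrite !acts_Inp, !acts_Outp, linked_cross by assumption; tauto. Qed.

Lemma receives_gprod a b m :
  receives (gprod X Y) a b m <->
  (receives X a b m \/ receives Y a b m) /\ ~ (sends X a b m \/ sends Y a b m).
Proof.
  unfold receives at 1; cbn [actI gprod]; rewrite si_Inp; unfold linked, receives; tauto.
Qed.

Lemma sends_gprod a b m :
  sends (gprod X Y) a b m <->
  (sends X a b m \/ sends Y a b m) /\ ~ (receives X a b m \/ receives Y a b m).
Proof.
  unfold sends at 1; cbn [actO gprod]; rewrite so_Outp; unfold linked, sends; tauto.
Qed.

Lemma hides_gprod a b m :
  hides (gprod X Y) a b m <-> hides X a b m \/ hides Y a b m \/ linked X Y a b m.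
Proof. unfold hides at 1; cbn [actH gprod]; rewrite sh_Hid; reflexivity. Qed.

Lemma trans_gprod_unshared v l u : (forall a b m, l <> Some (Hid a b m)) ->
  trans (gprod X Y) v l u <-> interleaved X Y v l u /\ ~ shared_lab X Y l.
Proof.
  intros Hl; cbn [trans gprod]; unfold interleaved; split; [|tauto].
  intros [H | [H | (a & b & m & E & _)]]; [tauto | tauto | destruct (Hl a b m E)].
Qed.

Lemma trans_gprod_tau v u : trans (gprod X Y) v None u <-> interleaved X Y v None u.
Proof. rewrite trans_gprod_unshared by congruence; cbn; tauto. Qed.

Lemma trans_gprod_Inp v u a b m :
  trans (gprod X Y) v (Some (Inp a b m)) u <->
  interleaved X Y v (Some (Inp a b m)) u /\ ~ (sends X a b m \/ sends Y a b m).
Proof.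
  rewrite trans_gprod_unshared by congruence; cbn [shared_lab so]; rewrite si_Inp.
  assert (Hr : interleaved X Y v (Some (Inp a b m)) u -> receives X a b m \/ receives Y a b m).
  { intros [[T _] | [T _]]; [left | right]; eapply trans_receives; eassumption. }
  unfold linked; tauto.
Qed.

Lemma trans_gprod_Outp v u a b m :
  trans (gprod X Y) v (Some (Outp a b m)) u <->
  interleaved X Y v (Some (Outp a b m)) u /\ ~ (receives X a b m \/ receives Y a b m).
Proof.
  rewrite trans_gprod_unshared by congruence; cbn [shared_lab si]; rewrite so_Outp.
  assert (Hs : interleaved X Y v (Some (Outp a b m)) u -> sends X a b m \/ sends Y a b m).
  { intros [[T _] | [T _]]; [left | right]; eapply trans_sends; eassumption. }
  unfold linked; tauto.
Qed.

Lemma trans_gprod_Hid v u a b m :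
  trans (gprod X Y) v (Some (Hid a b m)) u <->
  interleaved X Y v (Some (Hid a b m)) u \/ handshake X Y v a b m u.
Proof.
  cbn; unfold interleaved, handshake; split.
  - intros [H | [H | (a' & b' & m' & E & H)]]; [tauto | tauto | injection E as -> -> ->; tauto].
  - intros [[H | H] | H]; [left; tauto | right; left; tauto | right; right; eauto].
Qed.

Lemma wt_gprod : wt_gia (gprod X Y).
Proof.
  split; [|split].
  - destruct wtX as ((IX & OX & HX) & _), wtY as ((IY & OY & HY) & _).
    repeat split; cbn [actI actO actH gprod]; intros x H.
    + destruct H as [[H | H] _]; auto.
    + destruct H as [[H | H] _]; auto.
    + destruct H as [H | [H | H]]; auto; destruct x; cbn in H; [contradiction | contradiction | eauto].
  - intros a b m; rewrite receives_gprod, sends_gprod; tauto.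
  - intros v [a b m | a b m | a b m] u T.
    + rewrite trans_gprod_Inp in T; destruct T as [[[T _] | [T _]] Hs]; left; apply receives_gprod;
      split; try exact Hs; [left | right]; eapply trans_receives; eassumption.
    + rewrite trans_gprod_Outp in T; destruct T as [[[T _] | [T _]] Hr]; right; left; apply sends_gprod;
      split; try exact Hr; [left | right]; eapply trans_sends; eassumption.
    + right; right; apply hides_gprod; rewrite trans_gprod_Hid in T.
      destruct T as [[[T _] | [T _]] | [[T T'] | [T T']]]; unfold linked.
      * left; eapply trans_hides; eassumption.
      * right; left; eapply trans_hides; eassumption.
      * right; right; split; [right; eapply trans_receives | left; eapply trans_sends]; eassumption.
      * right; right; split; [left; eapply trans_receives | right; eapply trans_sends]; eassumption.
Qed.

End Binary.

Lemma gia_iso_trans X Y Z : gia_iso X Y -> gia_iso Y Z -> gia_iso X Z.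
Proof.
  intros (f & g & gf & fg & fi & Gr & AI & AO & AH & Tr)
    (f' & g' & gf' & fg' & fi' & Gr' & AI' & AO' & AH' & Tr').
  exists (fun v => f' (f v)), (fun w => g (g' w)); repeat match goal with |- _ /\ _ => split end.
  - intros v; rewrite gf', gf; reflexivity.
  - intros w; rewrite fg, fg'; reflexivity.
  - rewrite fi, fi'; reflexivity.
  - intros p; rewrite Gr, Gr'; reflexivity.
  - intros x; rewrite AI, AI'; reflexivity.
  - intros x; rewrite AO, AO'; reflexivity.
  - intros x; rewrite AH, AH'; reflexivity.
  - intros v l u; rewrite Tr, Tr'; reflexivity.
Qed.

Lemma gprod_comm X Y : gia_iso (gprod X Y) (gprod Y X).
Proof.
  assert (Hsi : forall x, si X Y x <-> si Y X x) by (intros []; cbn; tauto).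
  assert (Hso : forall x, so X Y x <-> so Y X x) by (intros []; cbn; tauto).
  assert (Hsh : forall x, sh X Y x <-> sh Y X x) by (intros []; cbn; tauto).
  assert (Hsl : forall l, shared_lab X Y l <-> shared_lab Y X l)
    by (intros [x |]; cbn; rewrite ?Hsi, ?Hso; tauto).
  exists (fun v => (snd v, fst v)), (fun v => (snd v, fst v));
    repeat match goal with |- _ /\ _ => split end.
  - intros [x y]; reflexivity.
  - intros [y x]; reflexivity.
  - reflexivity.
  - intros p; cbn; tauto.
  - intros x; cbn; rewrite Hsi; tauto.
  - intros x; cbn; rewrite Hso; tauto.
  - intros x; cbn; rewrite Hsh; tauto.
  - intros v [[a b m | a b m | a b m] |] u;
      first [rewrite !trans_gprod_Hid | rewrite !trans_gprod_unshared by congruence];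
      unfold interleaved, handshake; cbn [fst snd]; rewrite ?Hsl; tauto.
Qed.

Lemma gprod_iso_r X Y Y' : gia_iso Y Y' -> gia_iso (gprod X Y) (gprod X Y').
Proof.
  intros (f & g & gf & fg & fi & Gr & AI & AO & AH & Tr).
  assert (Hacts : forall x, acts Y x <-> acts Y' x)
    by (intros x; unfold acts; rewrite AI, AO, AH; reflexivity).
  assert (Hsi : forall x, si X Y x <-> si X Y' x) by (intros []; cbn; rewrite ?Hacts; reflexivity).
  assert (Hso : forall x, so X Y x <-> so X Y' x) by (intros []; cbn; rewrite ?Hacts; reflexivity).
  assert (Hsh : forall x, sh X Y x <-> sh X Y' x) by (intros []; cbn; rewrite ?Hacts; reflexivity).
  assert (Hsl : forall l, shared_lab X Y l <-> shared_lab X Y' l)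
    by (intros [x |]; cbn; rewrite ?Hsi, ?Hso; reflexivity).
  exists (fun v => (fst v, f (snd v))), (fun w => (fst w, g (snd w)));
    repeat match goal with |- _ /\ _ => split end; cbn.
  - intros [x y]; cbn; rewrite gf; reflexivity.
  - intros [x y']; cbn; rewrite fg; reflexivity.
  - rewrite fi; reflexivity.
  - intros p; rewrite Gr; reflexivity.
  - intros x; rewrite AI, Hsi; reflexivity.
  - intros x; rewrite AO, Hso; reflexivity.
  - intros x; rewrite AH, Hsh; reflexivity.
  - intros [x y] l [x' y']; cbn.
    assert (Heq : y' = y <-> f y' = f y)
      by (split; [congruence | intros E; rewrite <- (gf y'), <- (gf y), E; reflexivity]).
    rewrite Heq, Hsl; setoid_rewrite Tr; reflexivity.
Qed.

Section Associativity.
Variables X Y Z : gia P M.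
Hypotheses (wtX : wt_gia X) (wtY : wt_gia Y) (wtZ : wt_gia Z).
Hypotheses (sXY : separated X Y) (sXZ : separated X Z) (sYZ : separated Y Z).

Lemma receives_gprodA a b m :
  receives (gprod (gprod X Y) Z) a b m <-> receives (gprod X (gprod Y Z)) a b m.
Proof.
  rewrite !receives_gprod, !sends_gprod by auto using wt_gprod.
  destruct (sXY a b m), (sXZ a b m), (sYZ a b m); tauto.
Qed.

Lemma sends_gprodA a b m :
  sends (gprod (gprod X Y) Z) a b m <-> sends (gprod X (gprod Y Z)) a b m.
Proof.
  rewrite !sends_gprod, !receives_gprod by auto using wt_gprod.
  destruct (sXY a b m), (sXZ a b m), (sYZ a b m); tauto.
Qed.

Lemma hides_gprodA a b m :
  hides (gprod (gprod X Y) Z) a b m <-> hides (gprod X (gprod Y Z)) a b m.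
Proof.
  rewrite !hides_gprod by auto using wt_gprod; unfold linked.
  rewrite !sends_gprod, !receives_gprod by auto using wt_gprod.
  destruct (sXY a b m), (sXZ a b m), (sYZ a b m); tauto.
Qed.

Lemma trans_gprodA x y z l x' y' z' :
  trans (gprod (gprod X Y) Z) ((x, y), z) l ((x', y'), z') <->
  trans (gprod X (gprod Y Z)) (x, (y, z)) l (x', (y', z')).
Proof.
  destruct l as [[a b m | a b m | a b m] |];
    rewrite ?trans_gprod_Inp, ?trans_gprod_Outp, ?trans_gprod_Hid, ?trans_gprod_tau
      by auto using wt_gprod;
    unfold interleaved, handshake; cbn [fst snd];
    rewrite ?trans_gprod_Inp, ?trans_gprod_Outp, ?trans_gprod_Hid, ?trans_gprod_tau,
      ?sends_gprod, ?receives_gprod by auto;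
    unfold interleaved, handshake; cbn [fst snd st gprod]; rewrite ?pair_equal_spec;
    try tauto.
  all: pose proof (@trans_receives _ wtX x x' a b m); pose proof (@trans_sends _ wtX x x' a b m);
    pose proof (@trans_receives _ wtY y y' a b m); pose proof (@trans_sends _ wtY y y' a b m);
    pose proof (@trans_receives _ wtZ z z' a b m); pose proof (@trans_sends _ wtZ z z' a b m);
    destruct (sXY a b m), (sXZ a b m), (sYZ a b m); tauto.
Qed.

Lemma gprod_assoc : gia_iso (gprod (gprod X Y) Z) (gprod X (gprod Y Z)).
Proof.
  assert (wtL : wt_gia (gprod (gprod X Y) Z)) by auto using wt_gprod.
  assert (wtR : wt_gia (gprod X (gprod Y Z))) by auto using wt_gprod.
  exists (fun v => (fst (fst v), (snd (fst v), snd v))), (fun w => ((fst w, fst (snd w)), snd (snd w)));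
    repeat match goal with |- _ /\ _ => split end.
  - intros [[x y] z]; reflexivity.
  - intros [x [y z]]; reflexivity.
  - reflexivity.
  - intros p; cbn; tauto.
  - apply typed_actI_ext; [apply wtL | apply wtR | exact receives_gprodA].
  - apply typed_actO_ext; [apply wtL | apply wtR | exact sends_gprodA].
  - apply typed_actH_ext; [apply wtL | apply wtR | exact hides_gprodA].
  - intros [[x y] z] l [[x' y'] z']; exact (trans_gprodA x y z l x' y' z').
Qed.

End Associativity.
End Product.

Theorem mainTheorem1 (P M : Type) (I I' I'' : gia P M) :
  wf_gia I -> wf_gia I' -> wf_gia I'' ->
  (composable I I' -> gia_iso (gprod I I') (gprod I' I)) /\
  (composable I I' -> composable I I'' -> composable I' I'' ->
     gia_iso (gprod (gprod I I'') I') (gprod I (gprod I' I''))).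
Proof.
  intros W W' W''; split; [intros _; apply gprod_comm |].
  intros C C' C''.
  apply gia_iso_trans with (gprod I (gprod I'' I')).
  - apply gprod_assoc; auto using wf_wt_gia, wf_separated, separated_sym.
  - apply gprod_iso_r, gprod_comm.
Qed.
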